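(* Let $N=(V,E,\{\tau_{ij}\},\{u_{ij}\})$ be a temporal network with static (constant in time, not necessarily equal) integer edge lengths $\tau_{ij}$, $T$ a time horizon, and $\phi$ a cut function of a minimum $(s,0)$-$(d,T)$ cut of $\textsc{TEN}(N,T)$. Let $X_\phi=\{i:\phi(i)\in\{0,T+1\}\}$ and let $C\subseteq V\setminus X_\phi$ be such that for every $i\in C$, $\phi(i)$ does not belong to the union of $\mathcal T\cup\{\theta+\tau_{ij}:\theta\in\mathcal T,\ ij\in E\}$, $\{\phi(j)-\tau_{ij},\phi(j):ij\in E,\ j\notin C\}$ and $\{\phi(j)+\tau_{ji},\phi(j):ji\in E,\ j\notin C\}$. Then $\mathrm{cost}(\phi_C^+)=\mathrm{cost}(\phi_C^-)=\mathrm{cost}(\phi)$.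
   Context: $\textsc{TEN}(N,T)$ is the steady-state network on $V\times[0,T]$ with an edge $(i,t)\to(j,t+\tau_{ij})$ of capacity $u_{ij}(t)$ whenever $ij\in E$ and $u_{ij}(t)\ne0$, and an infinite-capacity edge $(i,t)\to(i,t+1)$ for $t\in[0,T-1]$; source $(s,0)$, sink $(d,T)$. A cut function is $\phi:V\to[0,T+1]$ with $\phi(s)=0,\phi(d)=T+1$, representing the cut with source side $\{(i,t):t\ge\phi(i)\}$; $\mathrm{cost}$ is total capacity of edges from source side to sink side. $\mathcal T=\{t:\exists ij\in E,\ u_{ij}(t)\ne u_{ij}(t-1)\}\cup\{0,T,T+1\}$. $\phi_C^\pm(i)=\phi(i)\pm1$ for $i\in C$ and $\phi_C^\pm(i)=\phi(i)$ otherwise. *)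

From HB Require Import structures.
From mathcomp Require Import all_boot all_order all_algebra.
Set Implicit Arguments. Unset Strict Implicit. Unset Printing Implicit Defensive.
Import Order.TTheory GRing.Theory Num.Theory.
Local Open Scope ring_scope.

(* Temporal network N = (V, E, tau, u):
   V : finType, E : {set V * V} (directed edges ij = (i,j)),
   tau : V -> V -> nat  (static integer transit times),
   u : V -> V -> nat -> R  (u i j t = capacity of ij at integer time t in [0,T]). *)

(* cost of the cut {(i,t) : t >= phi i} in TEN(N,T): total capacity of the
   edges (i,t) -> (j, t + tau_ij), 0 <= t, t + tau_ij <= T, going from the
   source side (t >= phi i) to the sink side (t + tau_ij < phi j).
   Holdover edges never cross such a cut; edges with u = 0 contribute 0. *)
Definition cost (V : finType) (R : numDomainType) (E : {set V * V})
    (tau : V -> V -> nat) (u : V -> V -> nat -> R) (T : nat) (phi : V -> int) : R :=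
  \sum_(e in E) \sum_(t < T.+1 |
      [&& phi e.1 <= (t : nat)%:Z,
          (t + tau e.1 e.2 <= T)%N &
          (t + tau e.1 e.2)%:Z < phi e.2]) u e.1 e.2 t.

Definition cut_fun (V : finType) (T : nat) (s d : V) (phi : V -> int) : Prop :=
  [/\ phi s = 0, phi d = (T.+1)%:Z & forall i, 0 <= phi i <= (T.+1)%:Z].

Definition min_cut_fun (V : finType) (R : numDomainType) (E : {set V * V})
    (tau : V -> V -> nat) (u : V -> V -> nat -> R) (T : nat) (s d : V)
    (phi : V -> int) : Prop :=
  cut_fun T s d phi /\
  forall psi, cut_fun T s d psi -> cost E tau u T phi <= cost E tau u T psi.

(* the set calT = {t : exists ij in E, u_ij(t) <> u_ij(t-1)} u {0, T, T+1}
   (capacity changes can only be observed for t-1, t in [0,T]) *)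
Definition calT (V : finType) (R : numDomainType) (E : {set V * V})
    (u : V -> V -> nat -> R) (T : nat) (x : int) : Prop :=
  x = 0 \/ x = T%:Z \/ x = (T.+1)%:Z \/
  exists t : nat, [/\ (1 <= t <= T)%N, x = t%:Z &
    exists2 e, e \in E & u e.1 e.2 t <> u e.1 e.2 t.-1].

Definition shift_plus (V : finType) (C : {set V}) (phi : V -> int) : V -> int :=
  fun i => if i \in C then phi i + 1 else phi i.
Definition shift_minus (V : finType) (C : {set V}) (phi : V -> int) : V -> int :=
  fun i => if i \in C then phi i - 1 else phi i.

Definition Xphi (V : finType) (T : nat) (phi : V -> int) : {set V} :=
  [set i | (phi i == 0) || (phi i == (T.+1)%:Z)].

From HB Require Import structures.
From mathcomp Require Import all_boot all_order all_algebra.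
From mathcomp Require Import zify lra.
Set Implicit Arguments. Unset Strict Implicit. Unset Printing Implicit Defensive.
Import Order.TTheory GRing.Theory Num.Theory.
Local Open Scope ring_scope.

(* An edge ij contributes the capacities at the departure times t with
   phi(i) <= t < phi(j) - tau_ij. Shifting the endpoints in C by +1 or by -1
   removes or adds the capacity at a boundary time of this window; the
   forbidden times make the capacities on both sides of each boundary equal
   and keep the window from being empty after one shift but not the other.
   So on every edge the two shifts change the contribution by opposite amounts,
   cost(phi_C^+) + cost(phi_C^-) = 2 cost(phi), and since both shifts are cut
   functions, minimality of phi forces both costs to equal cost(phi). *)

Section EdgeCost.
Variables (R : realDomainType) (w : nat -> R) (tau T : nat).

Definition edge_cost (x y : int) : R :=
  \sum_(t < T.+1 | [&& x <= (t : nat)%:Z, (t + tau <= T)%N & (t + tau)%:Z < y]) w t.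

Definition steady_at (x : int) : Prop := forall n : nat, x = n%:Z -> w n = w n.-1.

Lemma edge_cost_split_first (n : nat) (y : int) :
  (n + tau <= T)%N -> (n + tau)%:Z < y -> edge_cost n%:Z y = w n + edge_cost (n%:Z + 1) y.
Proof.
move=> hnT hy; have hn : (n < T.+1)%N by lia.
rewrite /edge_cost (bigD1 (Ordinal hn)) /=; last by apply/and3P; split => //; lia.
by congr (_ + _); apply: eq_bigl => t; rewrite -val_eqE /=; lia.
Qed.

Lemma edge_cost_split_last (x : int) (n : nat) :
  x <= n%:Z -> (n + tau <= T)%N -> edge_cost x ((n + tau)%:Z + 1) = w n + edge_cost x (n + tau)%:Z.
Proof.
move=> hx hnT; have hn : (n < T.+1)%N by lia.
rewrite /edge_cost (bigD1 (Ordinal hn)) /=; last by apply/and3P; split => //; lia.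
by congr (_ + _); apply: eq_bigl => t; rewrite -val_eqE /=; lia.
Qed.

Lemma edge_cost_eq0 (x y : int) : y <= x + tau%:Z -> edge_cost x y = 0.
Proof. by move=> hxy; rewrite /edge_cost big1 // => t /and3P [? ? ?]; lia. Qed.

Lemma edge_cost_shift_tail (x y : int) :
  1 <= x -> y <= T.+1%:Z -> x + tau%:Z != y -> steady_at x ->
  edge_cost (x + 1) y + edge_cost (x - 1) y = edge_cost x y *+ 2.
Proof.
move=> hx1 hyT hxy wx; rewrite mulr2n.
have [hlt | hge] := ltP (x + tau%:Z) y; last by rewrite !edge_cost_eq0 //; lia.
have [n hn] : exists n : nat, x = n%:Z by exists `|x|%N; lia.
have first_out : edge_cost x y = w n + edge_cost (x + 1) y.
  by rewrite hn edge_cost_split_first //; lia.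
have first_in : edge_cost (x - 1) y = w n.-1 + edge_cost x y.
  rewrite (_ : x - 1 = n.-1%:Z); last by lia.
  rewrite -(_ : n.-1%:Z + 1 = x); last by lia.
  by rewrite edge_cost_split_first //; lia.
rewrite -(wx n hn) in first_in.
lra.
Qed.

Lemma edge_cost_shift_head (x y : int) :
  0 <= x -> y <= T%:Z -> x + tau%:Z != y -> steady_at (y - tau%:Z) ->
  edge_cost x (y + 1) + edge_cost x (y - 1) = edge_cost x y *+ 2.
Proof.
move=> hx0 hyT hxy wy; rewrite mulr2n.
have [hlt | hge] := ltP (x + tau%:Z) y; last by rewrite !edge_cost_eq0 //; lia.
have [m hm] : exists m : nat, y = (m + tau)%:Z by exists `|y - tau%:Z|%N; lia.
have last_out : edge_cost x (y + 1) = w m + edge_cost x y.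
  by rewrite hm edge_cost_split_last //; lia.
have last_in : edge_cost x y = w m.-1 + edge_cost x (y - 1).
  rewrite (_ : y - 1 = (m.-1 + tau)%:Z); last by lia.
  rewrite -(_ : (m.-1 + tau)%:Z + 1 = y); last by lia.
  by rewrite edge_cost_split_last //; lia.
rewrite -(wy m) in last_in; last by lia.
lra.
Qed.

Lemma edge_cost_shift_both (x y : int) :
  1 <= x -> y <= T%:Z -> steady_at x -> steady_at (y - tau%:Z) ->
  edge_cost (x + 1) (y + 1) + edge_cost (x - 1) (y - 1) = edge_cost x y *+ 2.
Proof.
move=> hx1 hyT wx wy; rewrite mulr2n.
have [hlt | hge] := ltP (x + tau%:Z) y; last by rewrite !edge_cost_eq0 //; lia.
have [n hn] : exists n : nat, x = n%:Z by exists `|x|%N; lia.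
have [m hm] : exists m : nat, y = (m + tau)%:Z by exists `|y - tau%:Z|%N; lia.
have first_out : edge_cost x (y + 1) = w n + edge_cost (x + 1) (y + 1).
  by rewrite hn edge_cost_split_first //; lia.
have first_in : edge_cost (x - 1) (y - 1) = w n.-1 + edge_cost x (y - 1).
  rewrite (_ : x - 1 = n.-1%:Z); last by lia.
  rewrite -(_ : n.-1%:Z + 1 = x); last by lia.
  by rewrite edge_cost_split_first //; lia.
have last_out : edge_cost x (y + 1) = w m + edge_cost x y.
  by rewrite hm edge_cost_split_last //; lia.
have last_in : edge_cost x y = w m.-1 + edge_cost x (y - 1).
  rewrite (_ : y - 1 = (m.-1 + tau)%:Z); last by lia.
  rewrite -(_ : (m.-1 + tau)%:Z + 1 = y); last by lia.
  by rewrite edge_cost_split_last //; lia.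
rewrite -(wx n hn) -(wy m) in first_in last_in; last by lia.
lra.
Qed.

End EdgeCost.

Section Network.
Variables (V : finType) (R : realDomainType) (E : {set V * V})
  (tau : V -> V -> nat) (u : V -> V -> nat -> R) (T : nat).

Lemma costE (phi : V -> int) :
  cost E tau u T phi = \sum_(e in E) edge_cost (u e.1 e.2) (tau e.1 e.2) T (phi e.1) (phi e.2).
Proof. by []. Qed.

Lemma steady_at_notin_calT i j (x : int) :
  (i, j) \in E -> x <= T.+1%:Z -> ~ calT E u T x -> steady_at (u i j) x.
Proof.
move=> ijE hxT ncal n hn; case: (eqVneq (u i j n) (u i j n.-1)) => // hne.
case: n hn hne => [//|n] hn hne; exfalso; apply: ncal.
have [hT | hlt] := eqVneq n.+1 T; first by right; left; rewrite hn hT.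
have [hT1 | hle] := eqVneq n.+1 T.+1; first by right; right; left; rewrite hn hT1.
by right; right; right; exists n.+1; split => //; [lia | exists (i, j) => //; apply/eqP].
Qed.

Section Shift.
Variables (C : {set V}) (phi : V -> int).
Hypothesis phi_range : forall i, 0 <= phi i <= T.+1%:Z.
Hypothesis C_interior : forall i, i \in C -> 1 <= phi i <= T%:Z - 1.
Hypothesis C_departure : forall i, i \in C -> ~ calT E u T (phi i).
Hypothesis C_arrival : forall i, i \in C ->
  ~ (exists theta, calT E u T theta /\ exists2 e, e \in E & phi i = theta + (tau e.1 e.2)%:Z).
Hypothesis C_out : forall i j, (i, j) \in E -> i \in C -> j \notin C ->
  phi i <> phi j - (tau i j)%:Z.
Hypothesis C_in : forall i j, (i, j) \in E -> i \notin C -> j \in C ->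
  phi j <> phi i + (tau i j)%:Z.

Lemma steady_departure i j k : i \in C -> (j, k) \in E -> steady_at (u j k) (phi i).
Proof.
move=> iC jkE; have /andP [_ hT] := C_interior iC.
by apply: steady_at_notin_calT => //; [lia | exact: C_departure iC].
Qed.

Lemma steady_arrival i j k : i \in C -> (j, k) \in E ->
  steady_at (u j k) (phi i - (tau j k)%:Z).
Proof.
move=> iC jkE; have /andP [_ hT] := C_interior iC.
apply: steady_at_notin_calT => //; first by lia.
by move=> hcal; apply: (C_arrival iC); exists (phi i - (tau j k)%:Z); split => //;
  exists (j, k) => //; rewrite subrK.
Qed.

Lemma edge_cost_shift_midpoint i j : (i, j) \in E ->
  edge_cost (u i j) (tau i j) T (shift_plus C phi i) (shift_plus C phi j)
  + edge_cost (u i j) (tau i j) T (shift_minus C phi i) (shift_minus C phi j)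
  = edge_cost (u i j) (tau i j) T (phi i) (phi j) *+ 2.
Proof.
move=> ijE; rewrite /shift_plus /shift_minus.
have /andP [i0 iT] := phi_range i; have /andP [j0 jT] := phi_range j.
case: (boolP (i \in C)) => iC; case: (boolP (j \in C)) => jC.
- have /andP [i1 _] := C_interior iC; have /andP [_ jT1] := C_interior jC.
  apply: edge_cost_shift_both; [lia | lia | exact: steady_departure iC ijE
    | exact: steady_arrival jC ijE].
- have /andP [i1 _] := C_interior iC.
  apply: edge_cost_shift_tail => //; last exact: steady_departure iC ijE.
  by apply/eqP => hij; apply: (C_out ijE iC jC); lia.
- have /andP [_ jT1] := C_interior jC.
  apply: edge_cost_shift_head => //; [lia | | exact: steady_arrival jC ijE].
  by apply/eqP => hij; apply: (C_in ijE iC jC); lia.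
- by rewrite mulr2n.
Qed.

Lemma cost_shift_midpoint :
  cost E tau u T (shift_plus C phi) + cost E tau u T (shift_minus C phi)
  = cost E tau u T phi *+ 2.
Proof.
rewrite !costE -big_split -sumrMnl; apply: eq_bigr => -[i j] ijE.
exact: edge_cost_shift_midpoint.
Qed.

Lemma cut_fun_shift s d : s \notin C -> d \notin C -> cut_fun T s d phi ->
  cut_fun T s d (shift_plus C phi) /\ cut_fun T s d (shift_minus C phi).
Proof.
move=> sC dC [phis phid range]; rewrite /cut_fun /shift_plus /shift_minus.
rewrite (negbTE sC) (negbTE dC); split; split => // i; case: ifP => iC; try exact: range;
  have /andP [? ?] := C_interior iC; apply/andP; split; lia.
Qed.

End Shift.
End Network.

Lemma midpoint_of_minimum (R : realDomainType) (a b c : R) :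
  a + b = c *+ 2 -> c <= a -> c <= b -> a = c /\ b = c.
Proof. by rewrite mulr2n => hab ha hb; split; lra. Qed.

Theorem mainTheorem4 (V : finType) (R : realDomainType) (E : {set V * V})
    (tau : V -> V -> nat) (u : V -> V -> nat -> R)
    (u_ge0 : forall i j t, 0 <= u i j t)
    (T : nat) (s d : V) (phi : V -> int)
    (hphi : min_cut_fun E tau u T s d phi)
    (C : {set V})
    (hC : C \subset ~: Xphi T phi)
    (hforb : forall i, i \in C ->
       [/\ ~ calT E u T (phi i),
           ~ (exists theta, calT E u T theta /\
                exists2 e, e \in E & phi i = theta + (tau e.1 e.2)%:Z),
           (forall j, (i, j) \in E -> j \notin C ->
                phi i <> phi j - (tau i j)%:Z /\ phi i <> phi j) &
           (forall j, (j, i) \in E -> j \notin C ->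
                phi i <> phi j + (tau j i)%:Z /\ phi i <> phi j)]) :
  cost E tau u T (shift_plus C phi) = cost E tau u T phi /\
  cost E tau u T (shift_minus C phi) = cost E tau u T phi.
Proof.
have [[phis phid phi_range] phi_min] := hphi.
have notX i : i \in C -> phi i != 0 /\ phi i != T.+1%:Z.
  by move=> /(subsetP hC); rewrite !inE => /norP.
have C_interior i : i \in C -> 1 <= phi i <= T%:Z - 1.
  move=> iC; have [h0 h1] := notX i iC; have [ncal _ _ _] := hforb i iC.
  have hT : phi i != T%:Z by apply/eqP => hT; apply: ncal; right; left.
  by have := phi_range i; lia.
have sC : s \notin C by apply/negP => /notX; rewrite phis eqxx; case.
have dC : d \notin C by apply/negP => /notX; rewrite phid eqxx; case.
have [cut_plus cut_minus] := cut_fun_shift C_interior sC dC (And3 phis phid phi_range).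
apply: midpoint_of_minimum; [ | exact: phi_min cut_plus | exact: phi_min cut_minus].
apply: cost_shift_midpoint => // [i iC | i iC | i j ijE iC jC | i j ijE iC jC].
- by case: (hforb i iC).
- by case: (hforb i iC).
- by have [_ _ /(_ j ijE jC) []] := hforb i iC.
- by have [_ _ _ /(_ i ijE iC) []] := hforb j jC.
Qed.
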